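(* For every $\alpha\in(0,1)$ and every set of $m$ statistical queries $\mathcal{Q}$ over a universe $U$ of size $N$ with query matrix $Q\in[0,1]^{m\times N}$, there exists \[ s=\frac5\alpha\cdot\mathrm{hdisc}^*\left(Q,\frac{32\ln m}{\alpha^2}\right)=O\left(\frac{\log m}{\alpha}\cdot\mathrm{hdisc}^*\left(Q,\frac1{\alpha^2}\right)\right) \] such that for every dataset $x\in U^*$ whose rows are all distinct, there exists a dataset $y\in U^*$ of size at most $s$ such that $\|\mathcal{Q}(x)-\mathcal{Q}(y)\|_\infty\le\frac98\alpha$.
   Context: A statistical query is $q:U\to\mathbb{R}$ with $q(x)=\frac1{|x|}\sum_i q(x_i)$ for a dataset $x\in U^*$ (a finite sequence over $U$); $\mathcal{Q}(x)=(q_1(x),\ldots,q_m(x))$; the query matrix has $i$-th row $(q_i(u))_{u\in U}$. For an $m\times N$ matrix $Q$, $Q^*$ is the $(m+1)\times N$ matrix obtained by appending the all-ones row, $Q^*_S$ its submatrix of columns in $S$, and $\mathrm{hdisc}^*(Q,w)=\max_{S\subseteq[N],|S|\le w}\min_{z\in\{\pm1\}^S}\|Q^*_Sz\|_\infty$. *)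

From HB Require Import structures.
From mathcomp Require Import all_boot all_order all_algebra.
From mathcomp Require Import all_classical all_reals all_analysis.
Set Implicit Arguments. Unset Strict Implicit. Unset Printing Implicit Defensive.
Import Order.TTheory GRing.Theory Num.Theory.
Local Open Scope ring_scope.

(* Universe U is identified with 'I_N (|U| = N); the m queries are the rows
   of the query matrix Q : 'M[R]_(m, N), i.e. q_i(u) = Q i u. *)

(* sign vector restricted to S, encoded by a boolean function *)
Definition sgn (R : realType) (b : bool) : R := if b then 1 else -1.

(* ||Q^*_S z||_oo : max over the m rows of Q plus the all-ones row *)
Definition signed_norm (R : realType) (m N : nat) (Q : 'M[R]_(m, N))
    (S : {set 'I_N}) (z : {ffun 'I_N -> bool}) : R :=
  Num.max `|\sum_(u in S) sgn R (z u)|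
          (\big[Num.max/0]_(i < m) `|\sum_(u in S) Q i u * sgn R (z u)|).

(* min over z in {+-1}^S of ||Q^*_S z||_oo  (min over a finite nonempty set;
   the seed value is itself one of the candidates) *)
Definition disc_star (R : realType) (m N : nat) (Q : 'M[R]_(m, N))
    (S : {set 'I_N}) : R :=
  \big[Num.min/signed_norm Q S [ffun=> true]]_(z : {ffun 'I_N -> bool})
     signed_norm Q S z.

Definition hdisc_star (R : realType) (m N : nat) (Q : 'M[R]_(m, N)) (w : R) : R :=
  \big[Num.max/0]_(S : {set 'I_N} | (#|S|%:R <= w)) disc_star Q S.

Definition query_ans (R : realType) (m N : nat) (Q : 'M[R]_(m, N))
    (i : 'I_m) (x : seq 'I_N) : R :=
  (size x)%:R^-1 * \sum_(u <- x) Q i u.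

From HB Require Import structures.
From mathcomp Require Import all_boot all_order all_algebra.
From mathcomp Require Import all_classical all_reals all_analysis.
From mathcomp Require Import ring lra zify.

Set Implicit Arguments.
Unset Strict Implicit.

Import Order.TTheory GRing.Theory Num.Theory.
Local Open Scope ring_scope.

(* Two reductions are combined.  Sampling: along k greedy draws from the rows of x, the
   pessimistic estimator sum_i (exp (lam Y_i) + exp (- lam Y_i)), where Y_i is the accumulated
   deviation of query i from its answer on x, grows on average over the next draw by a factor at
   most 1 + lam^2/2; hence some multiset y of size k has error ln (2m) / (lam k) + lam / 2,
   which is at most 31 alpha / 60 for lam = alpha / 2 and k about w / 2, w = 32 ln m / alpha^2.
   Halving: a multiset of size n <= w is split by halving every multiplicity and sending the odd
   leftovers according to a colouring of discrepancy at most D = hdisc*(Q, w); the heavier half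
   has size (n + t) / 2 with 0 <= t <= D, and its answers differ by at most D over its size.
   Starting from a size in [2^f a, 2^f a + D], f halvings reach a size in [a, a + D] = [a, s]
   with accumulated error below 2 D / a <= alpha / 2, where a = s - D = (5 / alpha - 1) D.
   When w <= s, sampling alone already suffices. *)

Section Histograms.
Variable T : finType.

Definition hist_of (s : seq T) (u : T) : nat := count_mem u s.

Definition seq_of_hist (c : T -> nat) : seq T :=
  flatten [seq nseq (c u) u | u <- enum T].

Lemma count_seq_of_hist c u : count_mem u (seq_of_hist c) = c u.
Proof.
rewrite count_flatten -map_comp sumnE big_map big_enum /=.
under eq_bigr do rewrite count_nseq.
rewrite (bigD1 u) //= eqxx mul1n big1 ?addn0 // => v /negbTE.
by rewrite eq_sym => ->.
Qed.

Lemma sumr_seq_count (V : nmodType) (s : seq T) (F : T -> V) :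
  \sum_(v <- s) F v = \sum_u F u *+ count_mem u s.
Proof.
elim: s => [|a s IHs]; first by rewrite big_nil big1 // => u _; rewrite mulr0n.
rewrite big_cons IHs /=; under [RHS]eq_bigr do rewrite mulrnDr.
rewrite big_split /=; congr (_ + _).
rewrite (bigD1 a) //= eqxx mulr1n big1 ?addr0 // => u /negbTE.
by rewrite eq_sym => ->.
Qed.

Variable R : realType.

Definition hist_size (c : T -> nat) : R := \sum_u (c u)%:R.

Definition hist_sum (q : T -> R) (c : T -> nat) : R := \sum_u (c u)%:R * q u.

Definition hist_ans (q : T -> R) (c : T -> nat) : R := hist_sum q c / hist_size c.

Lemma hist_sum1 c : hist_sum (fun=> 1) c = hist_size c.
Proof. by apply: eq_bigr => u _; rewrite mulr1. Qed.

Lemma hist_sum_of q s : hist_sum q (hist_of s) = \sum_(v <- s) q v.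
Proof. by rewrite sumr_seq_count; apply: eq_bigr => u _; rewrite mulr_natl. Qed.

Lemma hist_size_of s : hist_size (hist_of s) = (size s)%:R.
Proof.
rewrite -sum1_size natr_sum sumr_seq_count.
by apply: eq_bigr => u _; rewrite mulr1n.
Qed.

Lemma hist_sum_seq_of_hist q c : \sum_(v <- seq_of_hist c) q v = hist_sum q c.
Proof.
by rewrite -hist_sum_of; apply: eq_bigr => u _; rewrite /hist_of count_seq_of_hist.
Qed.

Lemma hist_size_seq_of_hist c : (size (seq_of_hist c))%:R = hist_size c.
Proof.
by rewrite -hist_size_of; apply: eq_bigr => u _; rewrite /hist_of count_seq_of_hist.
Qed.

Lemma hist_sum_bounds q c :
  (forall u, 0 <= q u <= 1) -> 0 <= hist_sum q c <= hist_size c.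
Proof.
move=> q01; apply/andP; split.
  by apply: sumr_ge0 => u _; rewrite mulr_ge0 //; case/andP: (q01 u).
apply: ler_sum => u _; rewrite -[leRHS]mulr1 ler_wpM2l //.
by case/andP: (q01 u).
Qed.

End Histograms.

Lemma query_ans_hist_of (R : realType) (m N : nat) (Q : 'M[R]_(m, N)) i y :
  query_ans Q i y = hist_ans (Q i) (hist_of y).
Proof. by rewrite /hist_ans hist_sum_of hist_size_of mulrC. Qed.

Lemma query_ans_seq_of_hist (R : realType) (m N : nat) (Q : 'M[R]_(m, N)) i c :
  query_ans Q i (seq_of_hist c) = hist_ans (Q i) c.
Proof. by rewrite /query_ans hist_sum_seq_of_hist hist_size_seq_of_hist mulrC. Qed.

Section Discrepancy.
Variables (R : realType) (m N : nat) (Q : 'M[R]_(m, N)).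

Lemma sgn_negb b : sgn R (~~ b) = - sgn R b.
Proof. by case: b; rewrite /sgn /= ?opprK. Qed.

Lemma disc_star_attained (S : {set 'I_N}) :
  exists z, disc_star Q S = signed_norm Q S z.
Proof.
rewrite /disc_star; elim/big_rec: _ => [|z0 v _ [z ->]]; first by exists [ffun=> true].
by case: (leP (signed_norm Q S z0) (signed_norm Q S z)) => _; [exists z0 | exists z].
Qed.

Lemma disc_star_le_hdisc (w : R) (S : {set 'I_N}) :
  #|S|%:R <= w -> disc_star Q S <= hdisc_star Q w.
Proof. exact: (le_bigmax_cond _ (disc_star Q)). Qed.

Lemma hdisc_star_ge1 (w : R) (u : 'I_N) : 1 <= w -> 1 <= hdisc_star Q w.
Proof.
move=> w_ge1; apply: le_trans (disc_star_le_hdisc (S := [set u]) _); last by rewrite cards1.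
have [z ->] := disc_star_attained [set u].
by rewrite /signed_norm le_max big_set1 /sgn; case: (z u); rewrite ?normrN normr1 lexx.
Qed.

Lemma low_disc_coloring (w : R) (S : {set 'I_N}) :
  #|S|%:R <= w -> exists z : {ffun 'I_N -> bool},
  0 <= \sum_(u in S) sgn R (z u) <= hdisc_star Q w /\
  forall i, `|\sum_(u in S) Q i u * sgn R (z u)| <= hdisc_star Q w.
Proof.
move=> S_le_w; have [z Dz] := disc_star_attained S.
have := disc_star_le_hdisc S_le_w; rewrite Dz /signed_norm ge_max.
move=> /andP[bal_le rows_le].
have row_le i : `|\sum_(u in S) Q i u * sgn R (z u)| <= hdisc_star Q w.
  apply: le_trans rows_le.
  exact: (le_bigmax _ (fun i => `|\sum_(u in S) Q i u * sgn R (z u)|)).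
have [bal_ge0 | bal_lt0] := leP 0 (\sum_(u in S) sgn R (z u)).
  by exists z; rewrite bal_ge0 (le_trans (ler_norm _) bal_le).
exists [ffun u => ~~ z u]; split => [|i].
  under eq_bigr do rewrite ffunE sgn_negb.
  by rewrite sumrN oppr_ge0 (ltW bal_lt0) (le_trans _ bal_le) // -normrN ler_norm.
under eq_bigr do rewrite ffunE sgn_negb mulrN.
by rewrite sumrN normrN.
Qed.

End Discrepancy.

Lemma halved_ratio_dist (R : realType) (n s n' s' t d D : R) :
  0 < n -> 0 <= s <= n -> 0 <= t <= D -> `|d| <= D ->
  2 * n' = n + t -> 2 * s' = s + d ->
  `|s / n - s' / n'| <= D / n'.
Proof.
move=> n_gt0 /andP[s_ge0 s_le_n] /andP[t_ge0 t_le_D] d_le_D Dn' Ds'.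
have n'_gt0 : 0 < n' by lra.
have -> : s / n - s' / n' = (s * t - d * n) / (2 * n * n').
  have -> : s' = (s + d) / 2 by rewrite -Ds'; field.
  have -> : n' = (n + t) / 2 by rewrite -Dn'; field.
  by field; rewrite !gt_eqF //; lra.
rewrite normrM [`|_^-1|]gtr0_norm ?invr_gt0 ?mulr_gt0 // ler_pdivrMr ?mulr_gt0 //.
have -> : D / n' * (2 * n * n') = 2 * n * D by field; rewrite gt_eqF.
apply: le_trans (ler_normB _ _) _.
rewrite !normrM [`|s|]ger0_norm // [`|t|]ger0_norm // [`|n|]ger0_norm ?(ltW n_gt0) //.
nra.
Qed.

Lemma natr_half_coloring (R : realType) (n : nat) (b : bool) :
  2 * (n./2 + (odd n && b))%:R = n%:R + (if odd n then sgn R b else 0) :> R.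
Proof.
have -> : n%:R = (odd n)%:R + (n./2)%:R * 2 :> R.
  by rewrite -{1}(odd_double_half n) natrD -muln2 natrM.
by rewrite natrD /sgn; case: (odd n); case: b => /=; lra.
Qed.

Section Halving.
Variables (R : realType) (m N : nat) (Q : 'M[R]_(m, N)) (w : R).
Hypothesis Q01 : forall i u, 0 <= Q i u <= 1.
Let D := hdisc_star Q w.

Lemma hist_halve (c : 'I_N -> nat) : 0 < hist_size R c <= w ->
  exists c' t, 0 <= t <= D /\ 2 * hist_size R c' = hist_size R c + t /\
    forall i, `|hist_ans (Q i) c - hist_ans (Q i) c'| <= D / hist_size R c'.
Proof.
move=> /andP[c_gt0 c_le_w]; pose S := [set u | odd (c u)].
have S_le_w : #|S|%:R <= w.
  apply: le_trans c_le_w; rewrite -sum1_card natr_sum big_mkcond /=.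
  apply: ler_sum => u _; rewrite inE.
  by case: (c u) => [|k] //=; case: ifP; rewrite ?ler1n.
have [z [t_bounds d_le]] := low_disc_coloring Q S_le_w.
pose c' u := ((c u)./2 + (odd (c u) && z u))%N.
have twice_c' (q : 'I_N -> R) :
    2 * hist_sum q c' = hist_sum q c + \sum_(u in S) q u * sgn R (z u).
  rewrite /hist_sum mulr_sumr [\sum_(u in S) _]big_mkcond -big_split /=.
  apply: eq_bigr => u _; rewrite mulrA natr_half_coloring inE.
  by case: ifP => _; ring.
have size_c' : 2 * hist_size R c' = hist_size R c + \sum_(u in S) sgn R (z u).
  by rewrite -!hist_sum1 twice_c'; under eq_bigr do rewrite mul1r.
exists c', (\sum_(u in S) sgn R (z u)); split=> //; split=> // i.
exact: halved_ratio_dist (hist_sum_bounds c (Q01 i)) t_bounds (d_le i) size_c' _.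
Qed.

Lemma hist_halve_iter a : 0 < a -> forall f (c : 'I_N -> nat),
  2 ^+ f * a <= hist_size R c <= 2 ^+ f * a + D -> 2 ^+ f * a + D <= w ->
  exists c', a <= hist_size R c' <= a + D /\
    forall i, `|hist_ans (Q i) c - hist_ans (Q i) c'| <= (2 - 2 / 2 ^+ f) * (D / a).
Proof.
move=> a_gt0; elim=> [|f IHf] c.
  rewrite expr0 !mul1r => c_bounds _; exists c; split => // i.
  by rewrite subrr normr0 divr1 subrr mul0r.
rewrite exprS -mulrA => /andP[c_lo c_hi] c_le_w.
have fa_gt0 : 0 < 2 ^+ f * a by rewrite mulr_gt0 ?exprn_gt0.
have [|c1 [t [/andP[t_ge0 t_le_D] [size_c1 err_c1]]]] := @hist_halve c.
  by apply/andP; split; lra.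
have c1_bounds : 2 ^+ f * a <= hist_size R c1 <= 2 ^+ f * a + D.
  by apply/andP; split; lra.
have [|c' [c'_bounds err_c']] := IHf c1 c1_bounds; first lra.
exists c'; split => // i.
apply: le_trans (ler_distD (hist_ans (Q i) c1) _ _) _.
have err_step : D / hist_size R c1 <= D / (2 ^+ f * a).
  by rewrite ler_wpM2l ?lef_pV2 ?posrE //; lra.
apply: le_trans (lerD (le_trans (err_c1 i) err_step) (err_c' i)) _.
by rewrite le_eqVlt; apply/orP; left; apply/eqP; field; rewrite !gt_eqF ?exprn_gt0.
Qed.

End Halving.

Lemma expR_le_quadratic (R : realType) (t : R) :
  t <= 1 / 2 -> expR t <= 1 + t + 2 * t ^+ 2.
Proof.
move=> t_le; have t_lt1 : 0 < 1 - t by lra.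
have -> : expR t = (expR (- t))^-1 by rewrite expRN invrK.
apply: le_trans (_ : _ <= (1 - t)^-1) _.
  by rewrite lef_pV2 ?posrE ?expR_gt0 // -[1 - t]/(1 + - t) expR_ge1Dx.
by rewrite -[leLHS]mul1r ler_pdivrMr //; nra.
Qed.

Lemma sumr_const_seq (V : nmodType) (T : Type) (s : seq T) (x : V) :
  \sum_(v <- s) x = x *+ size s.
Proof. by rewrite big_const_seq count_predT iter_addr_0. Qed.

Lemma exists_le_mean (R : realType) (T : Type) (s : seq T) (F : T -> R) (A : R) :
  (0 < size s)%N -> \sum_(v <- s) F v <= (size s)%:R * A -> exists v, F v <= A.
Proof.
move=> s_gt0 sum_le; apply/not_existsP => all_gt.
have lt_F v : A < F v by rewrite ltNge; apply/negP; exact: all_gt.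
case: s s_gt0 sum_le => [//|v s] _; rewrite big_cons -natr1 mulrDl mul1r.
have : A *+ size s <= \sum_(u <- s) F u.
  by rewrite -sumr_const_seq; apply: ler_sum => u _; exact: ltW.
by rewrite -mulr_natl mulrC; have := lt_F v; lra.
Qed.

Lemma sum_expR_centered_le (R : realType) (T : Type) (x : seq T) (q : T -> R) (sg : R) :
  (0 < size x)%N -> (forall u, 0 <= q u <= 1) -> `|sg| <= 1 / 2 ->
  \sum_(u <- x) expR (sg * (q u - (size x)%:R^-1 * \sum_(v <- x) q v)) <=
    (size x)%:R * (1 + sg ^+ 2 / 2).
Proof.
move=> x_gt0 q01 sg_le; set n : R := (size x)%:R; set Sq := \sum_(v <- x) q v.
set mu := n^-1 * Sq.
have n_gt0 : 0 < n by rewrite ltr0n.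
have sum_const (A : R) : \sum_(v <- x) A = n * A by rewrite sumr_const_seq mulr_natl.
have n_mu : n * mu = Sq by rewrite /mu mulrA mulfV ?mul1r // gt_eqF.
have Sq_le_n : Sq <= n.
  by rewrite -[n]mulr1 -sum_const; apply: ler_sum => u _; case/andP: (q01 u).
have Sq_ge0 : 0 <= Sq by apply: sumr_ge0 => u _; case/andP: (q01 u).
have mu_ge0 : 0 <= mu by rewrite mulr_ge0 // invr_ge0 ltW.
have term_le u : expR (sg * (q u - mu)) <=
    1 + sg * (q u - mu) + 2 * sg ^+ 2 * (q u - 2 * mu * q u + mu ^+ 2).
  have /andP[q_ge0 q_le1] := q01 u.
  apply: le_trans (expR_le_quadratic _) _.
    apply: le_trans (ler_norm _) _; rewrite normrM.
    have : `|q u - mu| <= 1 by rewrite ler_norml; apply/andP; split; nra.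
    by have := normr_ge0 sg; have := normr_ge0 (q u - mu); nra.
  have : 0 <= sg ^+ 2 * (q u - q u ^+ 2) by rewrite mulr_ge0 ?sqr_ge0 //; nra.
  nra.
apply: le_trans (ler_sum _ (fun u _ => term_le u)) _.
have centered : \sum_(u <- x) sg * (q u - mu) = 0.
  by rewrite -mulr_sumr sumrB sum_const n_mu subrr mulr0.
have quadratic : \sum_(u <- x) 2 * sg ^+ 2 * (q u - 2 * mu * q u + mu ^+ 2) =
    2 * sg ^+ 2 * (Sq - 2 * mu * Sq + n * mu ^+ 2).
  by rewrite -mulr_sumr big_split sumrB -mulr_sumr sum_const.
rewrite !big_split /= centered quadratic sum_const -n_mu.
have : 0 <= sg ^+ 2 * n * (mu - 1 / 2) ^+ 2.
  by rewrite mulr_ge0 ?sqr_ge0 // mulr_ge0 ?sqr_ge0 // ltW.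
nra.
Qed.

Section DerandomizedSampling.
Variables (R : realType) (m N : nat) (Q : 'M[R]_(m, N)).
Hypothesis Q01 : forall i u, 0 <= Q i u <= 1.
Variables (x : seq 'I_N) (lam : R).
Hypotheses (x_gt0 : (0 < size x)%N) (lam_gt0 : 0 < lam) (lam_le : lam <= 1 / 2).

Let B := 1 + lam ^+ 2 / 2.
Let dev i (y : seq 'I_N) := \sum_(v <- y) (Q i v - query_ans Q i x).
Let potential y := \sum_i (expR (lam * dev i y) + expR (- (lam * dev i y))).

Lemma potential_mean y :
  \sum_(u <- x) potential (u :: y) <= (size x)%:R * (B * potential y).
Proof.
rewrite /potential exchange_big /= !mulr_sumr; apply: ler_sum => i _.
have dev_cons u : dev i (u :: y) = (Q i u - query_ans Q i x) + dev i y.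
  by rewrite /dev big_cons.
under eq_bigr do rewrite dev_cons mulrDr opprD !expRD -[- (lam * _)]mulNr.
rewrite big_split /= -!mulr_suml !mulrDr !mulrA.
apply: lerD; apply: ler_wpM2r; try exact: expR_ge0.
  by apply: sum_expR_centered_le x_gt0 (Q01 i) _; rewrite ger0_norm // ltW.
have -> : B = 1 + (- lam) ^+ 2 / 2 by rewrite sqrrN.
apply: sum_expR_centered_le x_gt0 (Q01 i) _.
by rewrite normrN ger0_norm // ltW.
Qed.

Lemma potential_greedy k : exists y, size y = k /\ potential y <= 2 * m%:R * B ^+ k.
Proof.
elim: k => [|k [y [size_y pot_y]]].
  exists [::]; split => //; rewrite /potential /dev.
  under eq_bigr do rewrite big_nil mulr0 oppr0 expR0.
  by rewrite sumr_const card_ord expr0 mulr1 -mulr_natl; lra.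
have [u pot_u] := exists_le_mean x_gt0 (potential_mean y).
exists (u :: y); split; first by rewrite /= size_y.
apply: le_trans pot_u _; rewrite exprS mulrCA ler_wpM2l //.
by rewrite /B addr_ge0 // divr_ge0 ?sqr_ge0.
Qed.

Lemma sample_approx k : (0 < k)%N -> exists y, size y = k /\ forall i,
  `|query_ans Q i x - query_ans Q i y| <= ln (2 * m%:R) / (lam * k%:R) + lam / 2.
Proof.
move=> k_gt0; have [y [size_y pot_y]] := potential_greedy k.
exists y; split => // i.
have m_gt0 : (0 < m)%N by apply: leq_ltn_trans (ltn_ord i).
have k_pos : 0 < k%:R :> R by rewrite ltr0n.
have dev_le_pot : expR (lam * `|dev i y|) <= potential y.
  apply: le_trans (_ : expR (lam * dev i y) + expR (- (lam * dev i y)) <= _).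
    case: (lerP 0 (dev i y)) => dev0.
      by rewrite ger0_norm // lerDl expR_ge0.
    by rewrite ltr0_norm // mulrN lerDr expR_ge0.
  rewrite /potential (bigD1 i) //= lerDl; apply: sumr_ge0 => j _.
  by rewrite addr_ge0 ?expR_ge0.
have pow_B : B ^+ k <= expR (k%:R * (lam ^+ 2 / 2)).
  rewrite expRM_natl lerXn2r ?nnegrE ?expR_ge0 ?expR_ge1Dx //.
  by rewrite addr_ge0 ?divr_ge0 ?sqr_ge0.
have dev_le : lam * `|dev i y| <= ln (2 * m%:R) + k%:R * (lam ^+ 2 / 2).
  rewrite -ler_expR expRD lnK ?posrE ?mulr_gt0 ?ltr0n //.
  apply: le_trans dev_le_pot (le_trans pot_y _).
  by rewrite ler_wpM2l ?mulr_ge0 ?ler0n.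
have -> : query_ans Q i x - query_ans Q i y = - (dev i y / k%:R).
  rewrite /dev sumrB sumr_const_seq /query_ans size_y -mulr_natl.
  by field; rewrite !gt_eqF ?ltr0n.
rewrite normrN normrM [`|_^-1|]gtr0_norm ?invr_gt0 // ler_pdivrMr //.
have -> : (ln (2 * m%:R) / (lam * k%:R) + lam / 2) * k%:R =
    (ln (2 * m%:R) + k%:R * (lam ^+ 2 / 2)) / lam by field; rewrite !gt_eqF.
by rewrite ler_pdivlMr // mulrC.
Qed.

End DerandomizedSampling.

Lemma ln2_ge_half (R : realType) : 1 / 2 <= ln (2 : R).
Proof.
have : ln (1 + - (1 / 2)) <= - (1 / 2) :> R by apply: le_ln1Dx; lra.
have -> : 1 + - (1 / 2) = 2^-1 :> R by field.
by rewrite lnV ?posrE //; lra.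
Qed.

Lemma exists_pow2_bracket (R : realType) (a b : R) :
  0 < a -> a <= b -> exists f, 2 ^+ f * a <= b < 2 ^+ f.+1 * a.
Proof.
move=> a_gt0 a_le_b; pose P f := 2 ^+ f * a <= b.
have P0 : P 0%N by rewrite /P expr0 mul1r.
have P_bounded f : P f -> (f <= Num.truncn (b / a))%N.
  move=> Pf; rewrite truncn_ge_nat ?divr_ge0 ?(ltW a_gt0) ?(le_trans (ltW a_gt0)) //.
  rewrite ler_pdivlMr //; apply: le_trans Pf; rewrite ler_wpM2r ?(ltW a_gt0) //.
  by rewrite -natrX ler_nat ltnW // ltn_expl.
have [f Pf f_max] := ex_maxnP (ex_intro P 0%N P0) P_bounded.
exists f; apply/andP; split=> //.
by rewrite ltNge; apply/negP => /f_max; rewrite ltnn.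
Qed.

Lemma ln_nat_ge_half (R : realType) (m : nat) : (1 < m)%N -> 1 / 2 <= ln (m%:R : R).
Proof.
move=> m_gt1; apply: le_trans (ln2_ge_half R) _.
by rewrite ler_ln ?posrE ?ltr0n ?ler_nat //; lia.
Qed.

Section SampleAndHalve.
Variables (R : realType) (m N : nat) (Q : 'M[R]_(m, N)) (alpha : R).
Let w := 32 * ln m%:R / alpha ^+ 2.
Let D := hdisc_star Q w.

Lemma sample_width_ge16 : 0 < alpha < 1 -> (1 < m)%N -> 16 <= w.
Proof.
move=> /andP[alpha_gt0 alpha_lt1] /(ln_nat_ge_half R) ln_m_ge.
have : alpha ^+ 2 < 1 by rewrite exprn_ilt1 // ltW.
by rewrite /w ler_pdivlMr ?exprn_gt0 //; lra.
Qed.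

Lemma sample_near (x : seq 'I_N) (T : R) :
  0 < alpha < 1 -> (1 < m)%N -> (forall i u, 0 <= Q i u <= 1) ->
  x != [::] -> (w + 1) / 2 <= T ->
  exists y, [/\ y != [::], T - 1 < (size y)%:R <= T &
    forall i, `|query_ans Q i x - query_ans Q i y| <= 31 / 60 * alpha].
Proof.
move=> alpha01 m_gt1 Q01 x_neq0 T_ge.
have w_ge16 := sample_width_ge16 alpha01 m_gt1.
have /andP[alpha_gt0 alpha_lt1] := alpha01.
pose k := Num.truncn T.
have /andP[k_le k_gt] : k%:R <= T < k.+1%:R by apply: truncn_itv; lra.
rewrite -natr1 in k_gt.
have k_gt0 : (0 < k)%N by rewrite -(ltr0n R); lra.
have x_gt0 : (0 < size x)%N by rewrite lt0n size_eq0.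
have half_le : alpha / 2 <= 1 / 2 by lra.
have [y [size_y err]] :=
  sample_approx Q01 x_gt0 (divr_gt0 alpha_gt0 (ltr0Sn R 1)) half_le k_gt0.
exists y; split; first by rewrite -size_eq0 size_y -lt0n.
  by rewrite size_y; apply/andP; split; lra.
move=> i; apply: le_trans (err i) _.
have ln_m_ge := ln_nat_ge_half R m_gt1.
have ln_2m : ln (2 * m%:R) <= 2 * ln m%:R :> R.
  rewrite lnM ?posrE ?ltr0n //; last by lia.
  suff : ln 2 <= ln m%:R :> R by lra.
  by rewrite ler_ln ?posrE ?ltr0n ?ler_nat //; lia.
have alpha2_gt0 : 0 < alpha ^+ 2 by rewrite exprn_gt0.
have alpha2_lt1 : alpha ^+ 2 < 1 by rewrite exprn_ilt1 // ltW.
have w_alpha2 : w * alpha ^+ 2 = 32 * ln m%:R by rewrite /w divfK ?gt_eqF.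
have k_alpha2 : alpha ^+ 2 * ((w - 1) / 2) <= alpha ^+ 2 * k%:R.
  by rewrite ler_wpM2l ?ltW //; lra.
suff : ln (2 * m%:R) / (alpha / 2 * k%:R) <= 4 / 15 * alpha by lra.
rewrite ler_pdivrMr ?mulr_gt0 ?ltr0n ?divr_gt0 //.
have -> : 4 / 15 * alpha * (alpha / 2 * k%:R) = 2 / 15 * (alpha ^+ 2 * k%:R).
  by rewrite expr2; field.
lra.
Qed.

Lemma sample_then_halve (x : seq 'I_N) (a : R) :
  0 < alpha < 1 -> (1 < m)%N -> (forall i u, 0 <= Q i u <= 1) -> x != [::] ->
  1 <= D -> 0 < a -> a + D <= w ->
  exists y, [/\ y != [::], (size y)%:R <= a + D &
    forall i, `|query_ans Q i x - query_ans Q i y| <= 31 / 60 * alpha + 2 * (D / a)].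
Proof.
move=> alpha01 m_gt1 Q01 x_neq0 D_ge1 a_gt0 aD_le_w.
have [|f /andP[f_lo f_hi]] := exists_pow2_bracket (b := w - D) a_gt0; first lra.
rewrite exprS -mulrA in f_hi.
have [|y [_ /andP[y_lo y_hi] err_y]] :=
  sample_near alpha01 m_gt1 Q01 x_neq0 (T := 2 ^+ f * a + D); first lra.
have [||c [/andP[c_ge c_le] err_c]] :=
  hist_halve_iter (w := w) Q01 a_gt0 (f := f) (c := hist_of y).
- by rewrite hist_size_of -/D; apply/andP; split; lra.
- by rewrite -/D; lra.
rewrite -/D in c_le err_c.
exists (seq_of_hist c); split; rewrite ?hist_size_seq_of_hist //.
  rewrite -size_eq0; apply/eqP => size0.
  by move: (hist_size_seq_of_hist R c); rewrite size0; lra.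
move=> i; rewrite query_ans_seq_of_hist.
have err_yc := err_c i; rewrite -query_ans_hist_of in err_yc.
apply: le_trans (ler_distD (query_ans Q i y) _ _) _.
have : 0 <= 2 / 2 ^+ f * (D / a).
  by apply: mulr_ge0; apply: divr_ge0; rewrite ?exprn_ge0 //; lra.
have := err_y i; lra.
Qed.

End SampleAndHalve.

Lemma halving_slack (R : realType) (alpha D : R) : 0 < alpha < 1 -> 0 < D ->
  0 < 5 / alpha * D - D /\ D / (5 / alpha * D - D) <= alpha / 4.
Proof.
move=> /andP[alpha_gt0 alpha_lt1] D_gt0.
have -> : 5 / alpha * D - D = (5 - alpha) / alpha * D by field; rewrite gt_eqF.
split; first by rewrite !mulr_gt0 ?invr_gt0 //; lra.
have -> : D / ((5 - alpha) / alpha * D) = alpha / (5 - alpha).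
  by field; rewrite !gt_eqF //; lra.
by rewrite ler_pdivrMr; [nra | lra].
Qed.

Theorem corollary6p9 (R : realType) (m N : nat) (Q : 'M[R]_(m, N))
  (alpha : R) :
  0 < alpha < 1 ->
  (1 < m)%N ->
  (forall i u, 0 <= Q i u <= 1) ->
  let s := 5 / alpha * hdisc_star Q (32 * ln (m%:R) / alpha ^+ 2) in
  forall x : seq 'I_N, x != [::] -> uniq x ->
  exists y : seq 'I_N, y != [::] /\ (size y)%:R <= s /\
    forall i : 'I_m, `|query_ans Q i x - query_ans Q i y| <= 9 / 8 * alpha.
Proof.
(* The argument only sees the multiset of rows of [x]. *)
move=> alpha01 m_gt1 Q01 s x x_neq0 _.
have w_ge16 := sample_width_ge16 alpha01 m_gt1.
have D_ge1 : 1 <= hdisc_star Q (32 * ln m%:R / alpha ^+ 2).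
  by case: x x_neq0 => // u _ _; apply: hdisc_star_ge1 u _; lra.
have [w_le_s | s_lt_w] := leP (32 * ln m%:R / alpha ^+ 2) s.
  have [|y [y_neq0 /andP[_ y_le] err]] := sample_near alpha01 m_gt1 Q01 x_neq0 (T := s).
    lra.
  exists y; split=> //; split=> // i.
  by apply: le_trans (err i) _; case/andP: alpha01; lra.
have [a_gt0 D_over_a] := halving_slack alpha01 (lt_le_trans ltr01 D_ge1).
have [|y [y_neq0 y_le err]] := sample_then_halve alpha01 m_gt1 Q01 x_neq0 D_ge1 a_gt0.
  by rewrite subrK ltW.
exists y; split=> //; split; first by move: y_le; rewrite subrK.
by move=> i; apply: le_trans (err i) _; case/andP: alpha01; lra.
Qed.
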